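(* Let $k\ge 1$ and let $G$ be a graph. Then $G$ is a $k$-OR-PCG, i.e. $G=\text{OR-PCG}_k(T_1,\ldots,T_k,I_1,\ldots,I_k)$ for some trees $T_1,\ldots,T_k$ with common leaf set $V(G)$ and intervals $I_1,\ldots,I_k$, if and only if there exist trees $T''_1,\ldots,T''_k$ with common leaf set $V(G)$ and a single interval $I$ of nonnegative reals such that $G=\text{OR-PCG}_k(T''_1,\ldots,T''_k,I,\ldots,I)$. The same equivalence holds with ''OR-PCG'' replaced by ''AND-PCG'' throughout.
   Context: All trees are unrooted with edges weighted by nonnegative real numbers; for leaves $u,v$ of a tree $T$, $d_T(u,v)$ is the sum of the weights on the unique path between $u$ and $v$. Given trees $T_1,\ldots,T_k$ with the same leaf set $L$ and (not necessarily disjoint) intervals $I_1,\ldots,I_k$ of nonnegative reals, $\text{OR-PCG}_k(T_1,\ldots,T_k,I_1,\ldots,I_k)$ is the graph with vertex set $L$ in which $\{u,v\}$ is an edge iff $d_{T_i}(u,v)\in I_i$ for at least one $i$; $\text{AND-PCG}_k(T_1,\ldots,T_k,I_1,\ldots,I_k)$ is the graph with vertex set $L$ in which $\{u,v\}$ is an edge iff $d_{T_i}(u,v)\in I_i$ for all $i$. A graph is a $k$-OR-PCG (resp. $k$-AND-PCG) if it equals such a graph for some choice of trees and intervals. *)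

From HB Require Import structures.
From mathcomp Require Import all_boot all_order all_algebra.
From mathcomp Require Import reals.
Set Implicit Arguments. Unset Strict Implicit. Unset Printing Implicit Defensive.
Import Order.TTheory GRing.Theory Num.Theory.
Local Open Scope ring_scope.

Definition upath (V : finType) (adj : rel V) (x : V) (p : seq V) : bool :=
  path adj x p && uniq (x :: p).

Definition deg (V : finType) (adj : rel V) (x : V) : nat := #|[set y | adj x y]|.

(* A finite edge-weighted unrooted tree with nonnegative real edge weights,
   whose set of leaves (vertices of degree <= 1) is identified with L via
   the injective map [leaf]. *)
Record wtree (R : realType) (L : finType) := WTree {
  node : finType;
  adj : rel node;
  wt : node -> node -> R;
  leaf : L -> node;
  adj_sym : symmetric adj;
  adj_irr : irreflexive adj;
  tree_connected : forall x y : node, connect adj x y;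
  tree_acyclic : forall (x : node) (p q : seq node),
      upath adj x p -> upath adj x q -> last x p = last x q -> p = q;
  wt_sym : forall x y, adj x y -> wt x y = wt y x;
  wt_ge0 : forall x y, adj x y -> 0 <= wt x y;
  leaf_inj : injective leaf;
  leaf_im : forall x : node, (exists l, leaf l = x) <-> (deg adj x <= 1)%N
}.

Fixpoint pweight (R : realType) (V : finType) (w : V -> V -> R) (x : V) (p : seq V) : R :=
  match p with
  | [::] => 0
  | y :: p' => w x y + pweight w y p'
  end.

(* d_T(u,v) = r : r is the weight of the (unique) path between leaves u, v. *)
Definition tdist (R : realType) (L : finType) (T : wtree R L) (u v : L) (r : R) : Prop :=
  exists p : seq (node T), upath (@adj R L T) (leaf T u) p /\
    last (leaf T u) p = leaf T v /\ pweight (@wt R L T) (leaf T u) p = r.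

Definition nonneg_itv (R : realType) (I : interval R) : Prop :=
  forall x : R, x \in I -> 0 <= x.

Definition or_pcg_edge (R : realType) (L : finType) (k : nat)
  (Ts : 'I_k -> wtree R L) (Is : 'I_k -> interval R) (u v : L) : Prop :=
  exists i : 'I_k, exists r, tdist (Ts i) u v r /\ r \in Is i.

Definition and_pcg_edge (R : realType) (L : finType) (k : nat)
  (Ts : 'I_k -> wtree R L) (Is : 'I_k -> interval R) (u v : L) : Prop :=
  forall i : 'I_k, exists r, tdist (Ts i) u v r /\ r \in Is i.

Definition graph_is (L : finType) (e : rel L) (E : L -> L -> Prop) : Prop :=
  forall u v : L, u != v -> (e u v <-> E u v).

Definition is_k_or_pcg (R : realType) (L : finType) (e : rel L) (k : nat) : Prop :=
  exists (Ts : 'I_k -> wtree R L) (Is : 'I_k -> interval R),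
    (forall i, nonneg_itv (Is i)) /\ graph_is e (or_pcg_edge Ts Is).

Definition is_k_and_pcg (R : realType) (L : finType) (e : rel L) (k : nat) : Prop :=
  exists (Ts : 'I_k -> wtree R L) (Is : 'I_k -> interval R),
    (forall i, nonneg_itv (Is i)) /\ graph_is e (and_pcg_edge Ts Is).

From HB Require Import structures.
From mathcomp Require Import all_boot all_order all_algebra.
From mathcomp Require Import reals ring lra.
From Stdlib Require Import Classical.
Set Implicit Arguments. Unset Strict Implicit. Unset Printing Implicit Defensive.
Import Order.TTheory GRing.Theory Num.Theory.
Local Open Scope ring_scope.

(* Only finitely many leaf-to-leaf distances occur in a tree, so an interval
   I_i can be replaced by a closed interval [l_i, h_i] that selects the same
   distances of T_i.  Multiplying every edge weight of T_i by c >= 0 and adding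
   t >= 0 for each leaf endpoint of an edge changes every distance d between
   distinct leaves into c d + 2 t, because the inner vertices of a path are not
   leaves.  This increasing affine map can send [l_i, h_i] onto [al, 1] for
   every al < 1 close enough to 1, so a single interval [al, 1] serves all the
   trees at once, for OR- and AND-PCGs alike. *)

Lemma functional_fin_image (X : finType) (Y : eqType) (P : X -> Y -> Prop) :
  (forall x y1 y2, P x y1 -> P x y2 -> y1 = y2) ->
  exists s : seq Y, forall x y, P x y -> y \in s.
Proof.
move=> Pfun.
suff [s sP] : exists s : seq Y, forall x, x \in enum X -> forall y, P x y -> y \in s.
  by exists s => x y; apply: sP; rewrite mem_enum.
elim: (enum X) => [|x r [s sP]]; first by exists [::].
have [[y0 Py0] | noP] := classic (exists y, P x y).
- exists (y0 :: s) => z /predU1P[-> y Py | zr y Py].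
    by rewrite (Pfun _ _ _ Py Py0) mem_head.
  by rewrite inE (sP z zr y Py) orbT.
- exists s => z /predU1P[-> y Py | ]; last exact: sP.
  by case: noP; exists y.
Qed.

Section RealCuts.
Variable R : realType.

Lemma mem_itv_between (J : interval R) x y z :
  x \in J -> y \in J -> x <= z <= y -> z \in J.
Proof.
case: J => bl br; rewrite !itv_boundlr => /andP[lx _] /andP[_ yr] /andP[xz zy].
by rewrite (le_trans lx) ?(le_trans _ yr) // leBSide.
Qed.

Lemma seq_itv_cut (s : seq R) (J : interval R) :
  exists l h, l < h /\ forall d, d \in s -> (d \in J) = (l <= d <= h).
Proof.
have [/hasP[x0 x0s x0J] | /hasPn sJ] := boolP (has (fun d => d \in J) s); last first.
  pose h := \big[Num.max/0]_(d <- s) d + 2.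
  exists (h - 1), h; split=> [|d ds]; first lra.
  have : d <= h - 2 by rewrite addrK (le_bigmax_seq _ _ _ _ ds).
  by rewrite (negbTE (sJ d ds)) => dh; apply/esym/negP => /andP[hd _]; lra.
pose a := \big[Num.min/x0]_(d <- s | d \in J) d.
pose b := \big[Num.max/x0]_(d <- s | d \in J) d.
pose lo := \big[Num.max/(a - 1)]_(d <- s | d < a) d.
have aJ : a \in J by rewrite /a; elim/big_ind: _ => // x y; case: leP.
have bJ : b \in J by rewrite /b; elim/big_ind: _ => // x y; case: leP.
have loa : lo < a by apply: bigmax_lt => //; lra.
have ab : a <= b.
  exact: le_trans (ge_bigmin_seq _ _ _ _ x0s x0J) (le_bigmax_seq _ _ _ _ x0s x0J).
exists ((lo + a) / 2), b; split=> [|d ds]; first lra.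
apply/idP/andP => [dJ | [ld db]].
  have := ge_bigmin_seq x0 _ _ id ds dJ; have := le_bigmax_seq x0 _ _ id ds dJ.
  rewrite -/a -/b; lra.
have [da | ad] := ltP d a; last by apply: mem_itv_between aJ bJ _; rewrite ad db.
have := le_bigmax_seq (a - 1) _ (fun d => d < a) id ds da; rewrite -/lo; lra.
Qed.

Lemma affine_onto_itv (l h al : R) : l < h -> al < 1 -> l <= al * h ->
  exists c t, [/\ 0 <= c, 0 <= t &
    forall d, (l <= d <= h) = (c * d + t * 2 \in `[al, 1])].
Proof.
move=> lh al1 lal.
have hl0 : 0 < h - l by lra.
pose c := (1 - al) / (h - l).
have c0 : 0 < c by rewrite divr_gt0 // subr_gt0.
have cE : c * (h - l) = 1 - al by rewrite divfK // gt_eqF.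
have ch1 : c * h <= 1.
  have key : (c * h - 1) * (h - l) = l - al * h by rewrite mulrBl mulrAC cE; ring.
  have : (c * h - 1) * (h - l) <= 0 by rewrite key subr_le0.
  by rewrite pmulr_lle0 // subr_le0.
exists c, ((1 - c * h) / 2); split; [exact: ltW | lra |] => d.
have -> : c * d + (1 - c * h) / 2 * 2 = 1 - c * (h - d) by field.
rewrite in_itv /=.
have -> : (al <= 1 - c * (h - d)) = (c * (h - d) <= c * (h - l)).
  by rewrite cE; apply/idP/idP => ?; lra.
rewrite ler_pM2l // gerBl pmulr_rge0 // subr_ge0.
by rewrite lerD2l lerN2 andbC.
Qed.

Lemma common_ratio (I : finType) (l h : I -> R) : (forall i, l i < h i) ->
  exists al, [/\ 0 <= al, al < 1 & forall i, l i <= al * h i].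
Proof.
move=> lh.
pose delta i := (h i - l i) / (1 + `|h i|).
have delta0 i : 0 < delta i by rewrite divr_gt0 ?subr_gt0 ?ltr_pwDl.
have deltaE i : delta i + delta i * `|h i| = h i - l i.
  by rewrite -[X in X + _]mulr1 -mulrDr divfK // gt_eqF // ltr_pwDl.
pose del := \big[Num.min/1]_i delta i.
have del0 : 0 < del by apply: lt_bigmin.
have del1 : del <= 1 by apply: bigmin_le_id.
exists (1 - del); split=> [||i]; [lra | lra |].
have := deltaE i.
have : del * h i <= del * `|h i| by apply: ler_wpM2l; [exact: ltW | exact: ler_norm].
have : del * `|h i| <= delta i * `|h i|.
  by apply: ler_wpM2r; [exact: normr_ge0 | exact: bigmin_le].
have := delta0 i; rewrite mulrBl mul1r; lra.
Qed.

End RealCuts.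

Section Stretch.
Variables (R : realType) (V : finType) (E : rel V).

Definition leaf_ind (x : V) : R := (deg E x <= 1)%N%:R.

Definition stretch_wt (w : V -> V -> R) (c t : R) (x y : V) : R :=
  c * w x y + t * (leaf_ind x + leaf_ind y).

Hypothesis E_sym : symmetric E.

Lemma leaf_ind_inner x y z : E x y -> E y z -> x != z -> leaf_ind y = 0.
Proof.
move=> xy yz xz.
have : [set x; z] \subset [set v | E y v].
  by apply/subsetP => v; rewrite !inE => /orP[] /eqP ->; rewrite // E_sym.
move/subset_leq_card; rewrite cards2 xz /leaf_ind /deg.
by case: #|_| => [|[|n]].
Qed.

Lemma pweight_stretch w c t x p : upath E x p -> p != [::] ->
  pweight (stretch_wt w c t) x p =
  c * pweight w x p + t * (leaf_ind x + leaf_ind (last x p)).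
Proof.
elim: p x => [|y p IH] x // /andP[/= /andP[xy yp] /andP[xNyp uyp]] _.
case: p IH yp xNyp uyp => [|z p] IH yp xNyp uyp; first by rewrite /stretch_wt /=; ring.
have y_inner : leaf_ind y = 0.
  case/andP: yp => yz _; apply: leaf_ind_inner xy yz _.
  by apply: contraNneq xNyp => ->; rewrite !inE eqxx orbT.
rewrite IH ?/upath ?yp // /= /stretch_wt y_inner; ring.
Qed.

End Stretch.

Arguments leaf_ind {R V} E x.

Section StretchTree.
Variables (R : realType) (L : finType) (T : wtree R L).
Local Notation E := (@adj _ _ T).
Local Notation W := (@wt _ _ T).

Lemma tdist_functional u v r1 r2 : tdist T u v r1 -> tdist T u v r2 -> r1 = r2.
Proof.
move=> [p [up [lp <-]]] [q [uq [lq <-]]].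
by rewrite (tree_acyclic up uq) // lp lq.
Qed.

Lemma leaf_ind_leaf u : leaf_ind E (leaf T u) = 1 :> R.
Proof. by rewrite /leaf_ind (leaf_im (leaf T u)).1 //; exists u. Qed.

Variables (c t : R).
Hypotheses (c0 : 0 <= c) (t0 : 0 <= t).

Lemma stretch_wt_sym x y : E x y ->
  stretch_wt E W c t x y = stretch_wt E W c t y x.
Proof. by move=> xy; rewrite /stretch_wt (wt_sym xy) (addrC (leaf_ind _ x)). Qed.

Lemma stretch_wt_ge0 x y : E x y -> 0 <= stretch_wt E W c t x y.
Proof.
move=> xy; rewrite /stretch_wt addr_ge0 ?mulr_ge0 ?addr_ge0 ?ler0n //.
exact: wt_ge0.
Qed.

Definition stretch_tree : wtree R L :=
  WTree (@adj_sym _ _ T) (@adj_irr _ _ T) (@tree_connected _ _ T)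
    (@tree_acyclic _ _ T) stretch_wt_sym stretch_wt_ge0 (@leaf_inj _ _ T)
    (@leaf_im _ _ T).

Lemma tdist_stretch u v r : u != v ->
  tdist stretch_tree u v r <-> exists2 d, tdist T u v d & r = c * d + t * 2.
Proof.
move=> uv.
have wE p : upath E (leaf T u) p -> last (leaf T u) p = leaf T v ->
    pweight (stretch_wt E W c t) (leaf T u) p =
    c * pweight W (leaf T u) p + t * 2.
  move=> up lp; rewrite (pweight_stretch (@adj_sym _ _ T) _ _ _ up).
    by rewrite lp !leaf_ind_leaf.
  by apply: contra_neq uv => p0; move: lp; rewrite p0 => /leaf_inj.
split=> [[p [up [lp <-]]] | [d [p [up [lp <-]]] ->]].
  by exists (pweight W (leaf T u) p); [exists p | exact: wE].
by exists p; rewrite wE.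
Qed.

End StretchTree.

Lemma tdist_itv_cut (R : realType) (L : finType) (T : wtree R L) (J : interval R) :
  exists l h, l < h /\ forall u v d, tdist T u v d -> (d \in J) = (l <= d <= h).
Proof.
have [s sP] := @functional_fin_image _ _ (fun uv : L * L => tdist T uv.1 uv.2)
  (fun _ _ _ => @tdist_functional _ _ _ _ _ _ _).
have [l [h [lh cutP]]] := seq_itv_cut s J.
by exists l, h; split=> // u v d uvd; apply: cutP (sP (u, v) d uvd).
Qed.

Lemma pcg_common_itv (R : realType) (L : finType) (k : nat)
    (Ts : 'I_k -> wtree R L) (Is : 'I_k -> interval R) :
  exists (Ts' : 'I_k -> wtree R L) (I : interval R), nonneg_itv I /\
    forall i u v, u != v ->
      (exists r, tdist (Ts i) u v r /\ r \in Is i) <->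
      (exists r, tdist (Ts' i) u v r /\ r \in I).
Proof.
have cut i : exists lh : R * R, lh.1 < lh.2 /\
    forall u v d, tdist (Ts i) u v d -> (d \in Is i) = (lh.1 <= d <= lh.2).
  by have [l [h lhP]] := tdist_itv_cut (Ts i) (Is i); exists (l, h).
have [lh lhP] := fin_all_exists cut.
have [al [al0 al1 alP]] := common_ratio (fun i => (lhP i).1).
have affine i : exists ct : R * R, [/\ 0 <= ct.1, 0 <= ct.2 &
    forall d, ((lh i).1 <= d <= (lh i).2) = (ct.1 * d + ct.2 * 2 \in `[al, 1])].
  have [c [t [c0 t0 ctP]]] := affine_onto_itv (lhP i).1 al1 (alP i).
  by exists (c, t).
have [ct ctP] := fin_all_exists affine.
have c0 i : 0 <= (ct i).1 by case: (ctP i).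
have t0 i : 0 <= (ct i).2 by case: (ctP i).
have itvE i u v d : tdist (Ts i) u v d ->
    (d \in Is i) = ((ct i).1 * d + (ct i).2 * 2 \in `[al, 1]).
  by case: (ctP i) => _ _ <- hd; apply: (lhP i).2 hd.
exists (fun i => stretch_tree (Ts i) (c0 i) (t0 i)), `[al, 1]; split.
  by move=> x; rewrite in_itv /= => /andP[/(le_trans al0)].
move=> i u v uv.
split=> [[d [hd dI]] | [r [/(tdist_stretch _ _ _ _ uv) [d hd ->] rI]]].
  exists ((ct i).1 * d + (ct i).2 * 2); rewrite -(itvE i u v d hd).
  by split=> //; apply/tdist_stretch => //; exists d.
by exists d; rewrite (itvE i u v d hd).
Qed.

Theorem theorem1 (R : realType) (L : finType) (e : rel L) (k : nat) :
  symmetric e -> irreflexive e -> (1 <= k)%N ->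
  (is_k_or_pcg R e k <->
     exists (Ts : 'I_k -> wtree R L) (I : interval R),
       nonneg_itv I /\ graph_is e (or_pcg_edge Ts (fun _ => I)))
  /\
  (is_k_and_pcg R e k <->
     exists (Ts : 'I_k -> wtree R L) (I : interval R),
       nonneg_itv I /\ graph_is e (and_pcg_edge Ts (fun _ => I))).
Proof.
move=> _ _ _; split; split.
- case=> Ts [Is [_ G]]; have [Ts' [I [I0 TsE]]] := pcg_common_itv Ts Is.
  exists Ts', I; split=> // u v uv; rewrite G //.
  by split=> -[i hi]; exists i; apply/(TsE i u v uv).
- by case=> Ts [I [I0 G]]; exists Ts, (fun=> I).
- case=> Ts [Is [_ G]]; have [Ts' [I [I0 TsE]]] := pcg_common_itv Ts Is.
  exists Ts', I; split=> // u v uv; rewrite G //.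
  by split=> hi i; apply/(TsE i u v uv).
- by case=> Ts [I [I0 G]]; exists Ts, (fun=> I).
Qed.
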